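(* Let $n\geqslant 1$. Every $\lambda\subset\mathbb N^{3n}$ which is a partition with embedding dimension $h_\lambda(1)=3n$ and socle type $(0,0,0,n)$ has Hilbert–Samuel function $(1,3n,3n,n)$; in particular it is an M-partition of type $(3n,3n,n)$ and length $3$. Moreover \[ \alpha^{3n}_{3n,n,3}=\frac{(3n)!}{6^n\,n!}. \]
   Context: Let $\mathbb N=\mathbb Z_{\geqslant 0}$ with the componentwise order. A partition in $\mathbb N^k$ is a finite subset $\lambda\subset\mathbb N^k$ closed downward; $\mathrm P^k_d$ is the set of those of size $d$. The degree of a point is the sum of its coordinates; $\lambda_{=i}$, $\lambda_{\geqslant i}$ are the elements of degree $i$, resp. $\geqslant i$; the Hilbert–Samuel function is $h_\lambda(i)=|\lambda_{=i}|$, written as the tuple $(h_\lambda(0),h_\lambda(1),\dots,h_\lambda(\ell))$ with $\ell=\ell(\lambda)$ the maximal degree (the length); $h_\lambda(1)$ is the embedding dimension. $\mathrm{Soc}(\lambda)$ is the set of maximal elements; the socle type $(0,0,0,n)$ means all elements of $\mathrm{Soc}(\lambda)$ have degree $3$ and there are exactly $n$ of them. For positive integers $k,q,m$, an M-partition of type $(k,q,m)$ is $\lambda\in\mathrm P^k_{1+k+q+m}$ with $\mathrm{Soc}(\lambda)\subset\lambda_{\geqslant3}$, $h_\lambda(1)=k$, $h_\lambda(2)=q$, $\sum_{i\geqslant3}h_\lambda(i)=m$; $\alpha^k_{q,m,\ell}$ is the number of M-partitions of type $(k,q,m)$ and length $\ell$. *)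

From mathcomp Require Import all_boot all_order.
From mathcomp Require Import finmap.
Set Implicit Arguments. Unset Strict Implicit. Unset Printing Implicit Defensive.
Local Open Scope fset_scope.

Definition pt (k : nat) := {ffun 'I_k -> nat}.

Definition le_pt (k : nat) (x y : pt k) : bool := [forall i, x i <= y i].

Definition deg (k : nat) (x : pt k) : nat := \sum_(i < k) x i.

Definition is_partition (k : nat) (l : {fset pt k}) : Prop :=
  forall x y : pt k, y \in l -> le_pt x y -> x \in l.

Definition layer (k : nat) (l : {fset pt k}) (i : nat) : {fset pt k} :=
  [fset x in l | deg x == i].
Definition layer_ge (k : nat) (l : {fset pt k}) (i : nat) : {fset pt k} :=
  [fset x in l | i <= deg x].

Definition hilb (k : nat) (l : {fset pt k}) (i : nat) : nat := #|` layer l i|.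

Definition plength (k : nat) (l : {fset pt k}) : nat :=
  \max_(x <- enum_fset l) deg x.

Definition socle (k : nat) (l : {fset pt k}) : {fset pt k} :=
  [fset x in l | all (fun y => le_pt x y ==> (y == x)) (enum_fset l)].

Definition socle_type_0003 (k : nat) (l : {fset pt k}) (n : nat) : Prop :=
  (forall x, x \in socle l -> deg x = 3) /\ #|` socle l| = n.

Definition Mpartition (k q m : nat) (l : {fset pt k}) : Prop :=
  [/\ 0 < k /\ 0 < q /\ 0 < m,
      is_partition l /\ #|` l| = (1 + k + q + m)%N,
      (forall x, x \in socle l -> 3 <= deg x),
      hilb l 1 = k /\ hilb l 2 = q &
      #|` layer_ge l 3| = m].

Definition alpha_is (k q m ell N : nat) : Prop :=
  exists S : {fset {fset pt k}},
    (forall l : {fset pt k}, l \in S <-> (Mpartition q m l /\ plength l = ell))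
    /\ #|` S| = N.

From mathcomp Require Import all_boot all_order.
From mathcomp Require Import finmap.
From mathcomp Require Import zify.
Set Implicit Arguments. Unset Strict Implicit. Unset Printing Implicit Defensive.

(* A partition with socle type (0,0,0,n) is the union of the downsets of its n
   socle elements, each of degree 3, so each involves at most 3 coordinates.
   Embedding dimension 3n forces every coordinate to occur, so the socle
   elements are 0/1 vectors whose supports are 3-sets partitioning the 3n
   coordinates.  Conversely every partition of the coordinates into triples
   gives such a partition, with Hilbert-Samuel function (1, 3n, 3n, n); hence
   alpha counts the partitions of a 3n-set into triples, (3n)!/(6^n n!). *)

Lemma card_in_imfset_set (T : finType) (R : choiceType) (f : T -> R) (E : {set T}) :
  {in E &, injective f} -> #|` [fset f x | x in E]%fset| = #|E|.
Proof.
move=> f_inj; rewrite card_in_imfset => [|x y xE yE]; last exact: f_inj.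
by rewrite -(card_uniqP (enum_finmem_uniq _)); apply: eq_card => x; rewrite enum_finmemE.
Qed.

Section Points.
Variable k : nat.
Implicit Types (x y z : pt k) (A B : {set 'I_k}).

Definition chi A : pt k := [ffun i => nat_of_bool (i \in A)].
Definition supp x : {set 'I_k} := [set i | x i != 0].

Lemma chiE A i : chi A i = (i \in A).
Proof. by rewrite ffunE. Qed.

Lemma deg_chi A : deg (chi A) = #|A|.
Proof.
rewrite /deg -sum1_card [RHS]big_mkcond /=.
by apply: eq_bigr => i _; rewrite chiE; case: (i \in A).
Qed.

Lemma chi_inj : injective chi.
Proof.
move=> A B eAB; apply/setP => i.
by have := congr1 (fun x : pt k => x i) eAB; rewrite !chiE; do 2 case: (_ \in _).
Qed.

Lemma le_pt_refl x : le_pt x x.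
Proof. exact/forallP. Qed.

Lemma le_pt_trans y x z : le_pt x y -> le_pt y z -> le_pt x z.
Proof.
by move=> /forallP xy /forallP yz; apply/forallP => i; apply: leq_trans (xy i) (yz i).
Qed.

Lemma le_pt_chi A B : le_pt (chi A) (chi B) = (A \subset B).
Proof.
apply/forallP/subsetP => [AB i iA | AB i].
  by have := AB i; rewrite !chiE iA; case: (i \in B).
by rewrite !chiE; case iA: (i \in A) => //; rewrite AB.
Qed.

Lemma le_pt_deg_eq x y : le_pt x y -> deg y <= deg x -> x = y.
Proof.
move=> /forallP xy dyx.
have gap : deg y = deg x + \sum_i (y i - x i).
  by rewrite /deg -big_split; apply: eq_bigr => i _ /=; rewrite subnKC.
have /eqP : \sum_i (y i - x i) = 0 by move: dyx; rewrite gap; lia.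
rewrite sum_nat_eq0 => /forallP yx; apply/ffunP => i.
by have := yx i; have := xy i; rewrite subn_eq0 => ??; apply/eqP; rewrite eqn_leq; apply/andP.
Qed.

Lemma deg_supp x : deg x = #|supp x| + \sum_i (x i).-1.
Proof.
rewrite /deg -sum1_card [X in X + _]big_mkcond -big_split /=.
by apply: eq_bigr => i _; rewrite inE; case: (x i).
Qed.

Lemma card_supp_le_deg x : #|supp x| <= deg x.
Proof. by rewrite deg_supp leq_addr. Qed.

Lemma chi_supp x : deg x <= #|supp x| -> x = chi (supp x).
Proof.
rewrite deg_supp -[X in _ <= X]addn0 leq_add2l leqn0 sum_nat_eq0 => /forallP x01.
apply/ffunP => i; have := x01 i; rewrite chiE inE.
by case: (x i) => [|[|m]].
Qed.

Lemma supp_eq0 x : (supp x == set0) = (deg x == 0).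
Proof.
rewrite /deg sum_nat_eq0; apply/eqP/forallP => [x0 i | x0].
  by have := in_set0 i; rewrite -x0 inE => /negbFE.
by apply/setP => i; rewrite !inE; move: (x0 i) => /= /eqP ->.
Qed.

Lemma deg_eq0 x : deg x = 0 -> x = chi set0.
Proof.
move=> d0; have /eqP s0 : supp x == set0 by rewrite supp_eq0 d0.
by rewrite -s0; apply: chi_supp; rewrite d0.
Qed.

Lemma deg_eq1 x : deg x = 1 -> exists i, x = chi [set i].
Proof.
move=> d1; have s1 : #|supp x| == 1.
  have : 0 < #|supp x| by rewrite card_gt0 supp_eq0 d1.
  have := card_supp_le_deg x; rewrite d1; lia.
have /cards1P [i si] := s1; exists i.
by rewrite -si; apply: chi_supp; rewrite d1 (eqP s1).
Qed.

Lemma le_pt_chi_inv x B : le_pt x (chi B) -> exists2 A : {set 'I_k}, A \subset B & x = chi A.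
Proof.
move/forallP => xB; exists (supp x).
  apply/subsetP => i; rewrite inE; have := xB i; rewrite chiE.
  by case: (i \in B); case: (x i).
apply: chi_supp; rewrite deg_supp -[X in _ <= X]addn0 leq_add2l leqn0 sum_nat_eq0.
by apply/forallP => i; have := xB i; rewrite chiE; case: (i \in B); case: (x i) => [|[|]].
Qed.

End Points.

Section Partitions.
Variable k : nat.
Implicit Types (x y : pt k) (l : {fset pt k}).

Lemma in_layer l i x : (x \in layer l i) = (x \in l) && (deg x == i).
Proof. by rewrite !inE. Qed.

Lemma in_layer_ge l i x : (x \in layer_ge l i) = (x \in l) && (i <= deg x).
Proof. by rewrite !inE. Qed.

Lemma in_socle l x :
  reflect (x \in l /\ forall y, y \in l -> le_pt x y -> y = x) (x \in socle l).
Proof.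
rewrite !inE; apply: (iffP andP) => [[xl /allP top] | [xl top]]; split => //.
  by move=> y yl xy; have := top y yl; rewrite xy => /eqP.
by apply/allP => y yl; apply/implyP => xy; rewrite (top y yl xy).
Qed.

Lemma deg_le_plength l x : x \in l -> deg x <= plength l.
Proof. by move=> xl; apply: (leq_bigmax_seq x). Qed.

Lemma plength_le l m : (forall x, x \in l -> deg x <= m) -> plength l <= m.
Proof. by move=> lm; apply/bigmax_leqP_seq => x xl _; apply: lm. Qed.

Lemma socle_above l x : x \in l -> exists2 s, s \in socle l & le_pt x s.
Proof.
have [m] := ubnP (plength l - deg x); elim: m x => // m IH x ltm xl.
have [xs | /negP] := boolP (x \in socle l); first by exists x; rewrite ?le_pt_refl.
rewrite !inE xl /= => /negP; rewrite -has_predC => /hasP [y yl /=].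
rewrite negb_imply => /andP [xy yx].
have ltxy : deg x < deg y.
  by rewrite ltnNge; apply: contra yx => dyx; rewrite (le_pt_deg_eq xy dyx).
have [s ss ys] : exists2 s, s \in socle l & le_pt y s.
  by apply: IH => //; have := deg_le_plength yl; lia.
by exists s => //; apply: le_pt_trans ys.
Qed.

Lemma top_layer_sub_socle l x : x \in l -> plength l <= deg x -> x \in socle l.
Proof.
move=> xl topx; apply/in_socle; split => // y yl xy; apply/esym/(le_pt_deg_eq xy).
by apply: leq_trans (deg_le_plength yl) topx.
Qed.

Lemma socle_eq_layer_ge l :
  (forall s, s \in socle l -> plength l <= deg s) -> socle l = layer_ge l (plength l).
Proof.
move=> sdeg; apply/fsetP => x; rewrite in_layer_ge; apply/idP/andP => [xs | [xl topx]].
  by split; [case/in_socle: xs | apply: sdeg].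
exact: top_layer_sub_socle.
Qed.

Lemma layer_ge_plength l : layer_ge l (plength l) = layer l (plength l).
Proof.
apply/fsetP => x; rewrite in_layer_ge in_layer eqn_leq.
by case xl: (x \in l); rewrite //= deg_le_plength.
Qed.

Lemma hilb0 l : is_partition l -> l != fset0 -> hilb l 0 = 1.
Proof.
move=> lpart /fset0Pn [y yl]; apply/eqP/cardfs1P; exists (chi set0).
apply/fsetP => x; rewrite in_layer inE; apply/andP/eqP => [[_ /eqP /deg_eq0] // | ->].
split; last by rewrite deg_chi cards0.
by apply: lpart yl _; apply/forallP => i; rewrite chiE inE.
Qed.

Lemma card_sum_hilb l : #|` l| = \sum_(i < (plength l).+1) hilb l i.
Proof.
rewrite card_fset_sum1.
transitivity (\sum_(x <- l) \sum_(i < (plength l).+1) (deg x == i)).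
  rewrite big_seq [RHS]big_seq; apply: eq_bigr => x xl.
  rewrite -big_mkcond /= (eq_bigl (fun i : 'I__ => i == deg x :> nat)) => [|i];
    last by rewrite eq_sym.
  by rewrite (big_ord1_eq _ (fun=> 1)) ltnS deg_le_plength.
rewrite exchange_big; apply: eq_bigr => i _.
rewrite /hilb card_fset_sum1 /layer -big_fset_condE [RHS]big_mkcond.
by apply: eq_bigr => x _; case: (_ == _).
Qed.

Lemma Mpartition_socle q m l : Mpartition q m l -> plength l = 3 ->
  (forall s, s \in socle l -> deg s = 3) /\ #|` socle l| = m.
Proof.
case=> _ _ socle_ge3 _ layer3 l_len.
have socle3 s : s \in socle l -> deg s = 3.
  move=> ss; apply/eqP; rewrite eqn_leq socle_ge3 // andbT -l_len.
  by apply: deg_le_plength; case/in_socle: ss.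
split=> //; rewrite -layer3 -l_len socle_eq_layer_ge // => s /socle3 ->.
by rewrite l_len.
Qed.

End Partitions.

Section BlockDownset.
Local Open Scope fset_scope.
Variable k : nat.
Implicit Types (x : pt k) (A B : {set 'I_k}) (E P : {set {set 'I_k}}).

Definition block_subsets P := [set A : {set 'I_k} | [exists B in P, A \subset B]].
Definition block_downset P : {fset pt k} := [fset chi A | A in block_subsets P].

Lemma card_imfset_chi E : #|` [fset chi A | A in E]| = #|E|.
Proof. by apply: card_in_imfset_set => A B _ _; apply: chi_inj. Qed.

Lemma chi_in_imfset E A : (chi A \in [fset chi A | A in E]) = (A \in E).
Proof. by rewrite mem_imfset //; apply: chi_inj. Qed.

Lemma imfset_chiP E x :
  reflect (exists2 A, A \in E & x = chi A) (x \in [fset chi A | A in E]).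
Proof.
apply: (iffP idP) => [/imfsetP [A /= EA ->] | [A EA ->]]; first by exists A.
by rewrite chi_in_imfset.
Qed.

Lemma in_block_subsets P A : (A \in block_subsets P) = [exists B in P, A \subset B].
Proof. by rewrite inE. Qed.

Lemma block_in_block_subsets P B : B \in P -> B \in block_subsets P.
Proof. by move=> PB; rewrite in_block_subsets; apply/existsP; exists B; rewrite PB subxx. Qed.

Lemma block_downset_partition P : is_partition (block_downset P).
Proof.
move=> x y /imfset_chiP [A]; rewrite in_block_subsets => /exists_inP [B PB AB] ->.
case/le_pt_chi_inv => A' A'A ->; rewrite chi_in_imfset in_block_subsets.
by apply/exists_inP; exists B; rewrite // (subset_trans A'A AB).
Qed.

Lemma hilb_block_downset P i :
  hilb (block_downset P) i = #|[set A in block_subsets P | #|A| == i]|.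
Proof.
rewrite /hilb -card_imfset_chi; congr #|` _|; apply/fsetP => x.
rewrite in_layer; apply/andP/imfset_chiP => [[/imfset_chiP [A EA ->]] | [A]].
  by rewrite deg_chi => dA; exists A; rewrite // inE EA.
by rewrite inE => /andP [EA dA] ->; rewrite chi_in_imfset deg_chi.
Qed.

Section TrivIset.
Variable P : {set {set 'I_k}}.
Hypothesis tP : trivIset P.

Lemma trivIset_block_eq A B1 B2 : B1 \in P -> B2 \in P ->
  A != set0 -> A \subset B1 -> A \subset B2 -> B1 = B2.
Proof.
move=> PB1 PB2 /set0Pn [i iA] AB1 AB2.
by rewrite -(def_pblock tP PB1 (subsetP AB1 i iA)) (def_pblock tP PB2 (subsetP AB2 i iA)).
Qed.

Lemma card_block_subsets_eq i : 0 < i ->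
  #|[set A in block_subsets P | #|A| == i]| = \sum_(B in P) 'C(#|B|, i).
Proof.
move=> i_gt0.
have count_blocks A :
    \sum_(B in P) ((A \subset B) && (#|A| == i)) = (A \in block_subsets P) && (#|A| == i).
  rewrite in_block_subsets.
  have [/exists_inP [B0 PB0 AB0] | noB] /= := boolP [exists B in P, A \subset B].
    rewrite (bigD1 B0) //= AB0 big1 ?addn0 // => B /andP [PB nB0].
    case AB: (A \subset B); case: eqP => //= cA.
    have A0 : A != set0 by rewrite -card_gt0 cA.
    by case/eqP: nB0; apply: trivIset_block_eq AB AB0.
  rewrite big1 // => B PB; case AB: (A \subset B) => //.
  by case/exists_inP: noB; exists B.
transitivity (\sum_(A : {set 'I_k}) \sum_(B in P) ((A \subset B) && (#|A| == i))).
  rewrite -sum1_card big_mkcond; apply: eq_bigr => A _.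
  by rewrite count_blocks inE; case: (_ && _).
rewrite exchange_big; apply: eq_bigr => B PB; rewrite -cards_draws -sum1_card [RHS]big_mkcond.
by apply: eq_bigr => A _; rewrite inE; case: (_ && _).
Qed.

Hypothesis P0 : set0 \notin P.

Lemma chi_in_socle_block_downset A : (chi A \in socle (block_downset P)) = (A \in P).
Proof.
apply/in_socle/idP => [[] | PA].
  rewrite chi_in_imfset in_block_subsets => /exists_inP [B PB AB] top.
  have eBA : chi B = chi A.
    by apply: top; rewrite ?le_pt_chi // chi_in_imfset block_in_block_subsets.
  by rewrite -(chi_inj eBA).
split; first by rewrite chi_in_imfset block_in_block_subsets.
move=> y /imfset_chiP [A']; rewrite in_block_subsets => /exists_inP [B PB A'B] ->.
rewrite le_pt_chi => AA'; congr chi; apply/eqP; rewrite eqEsubset AA' /=.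
have A0 : A != set0 by apply: contraNneq P0 => <-.
by rewrite andbT (trivIset_block_eq PA PB A0 (subxx A) (subset_trans AA' A'B)).
Qed.

Lemma socle_block_downset : socle (block_downset P) = [fset chi A | A in P].
Proof.
apply/fsetP => x; apply/idP/imfset_chiP => [xs | [A PA ->]].
  have /imfset_chiP [A _ ex] : x \in block_downset P by case/in_socle: xs.
  by exists A; rewrite // -chi_in_socle_block_downset -ex.
by rewrite chi_in_socle_block_downset.
Qed.

End TrivIset.

Lemma block_downset_inj P Q :
  trivIset P -> set0 \notin P -> trivIset Q -> set0 \notin Q ->
  block_downset P = block_downset Q -> P = Q.
Proof.
move=> tP P0 tQ Q0 ePQ; apply/setP => A.
by rewrite -(chi_in_socle_block_downset tP P0) ePQ chi_in_socle_block_downset.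
Qed.

End BlockDownset.

Section TriplePartitions.
Variable k : nat.
Implicit Types (x : 'I_k) (B C U : {set 'I_k}) (P : {set {set 'I_k}}).

Definition triple_partitions U :=
  [set P : {set {set 'I_k}} | partition P U & [forall B in P, #|B| == 3]].

Lemma triple_partitionsP U P :
  reflect (partition P U /\ {in P, forall B, #|B| = 3}) (P \in triple_partitions U).
Proof.
rewrite inE; apply: (iffP andP) => [[PU /forall_inP P3] | [PU P3]].
  by split=> // B /P3 /eqP.
by split=> //; apply/forall_inP => B /P3 ->.
Qed.

Lemma card_triple_partition U P : P \in triple_partitions U -> #|U| = 3 * #|P|.
Proof. by case/triple_partitionsP => PU P3; rewrite (card_uniform_partition P3 PU) mulnC. Qed.

Lemma triple_partitions_set0 : triple_partitions set0 = [set set0].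
Proof.
apply/setP => P; rewrite inE; apply/triple_partitionsP/eqP => [[] | ->].
  by rewrite partition_set0 => /eqP.
by rewrite partition_set0; split=> // B; rewrite inE.
Qed.

Lemma triple_partitions_block U B x : x \in B -> B \subset U -> #|B| = 3 ->
  [set P in triple_partitions U | pblock P x == B] =
  [set B |: P | P in triple_partitions (U :\: B)].
Proof.
move=> xB BU B3; apply/setP => P; rewrite inE; apply/andP/imsetP.
  case=> /triple_partitionsP [PU P3] /eqP pxB.
  have PB : B \in P by rewrite -pxB pblock_mem // (cover_partition PU) (subsetP BU).
  exists (P :\ B); last by rewrite setD1K.
  apply/triple_partitionsP; split; first exact: partitionD1.
  by move=> B'; rewrite inE => /andP [_ /P3].
case=> P' /triple_partitionsP [P'U P'3] ->.
have B0 : B != set0 by apply/set0Pn; exists x.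
have BUB : [disjoint B & U :\: B].
  by have := subxx (U :\: B); rewrite subsetD disjoint_sym => /andP [].
have BUU : B :|: U :\: B = U by rewrite -{1}(setIidPr BU) setID.
have BP' := partitionU1 P'U B0 BUB; rewrite BUU in BP'.
split.
  apply/triple_partitionsP; split=> // B'.
  by case/setU1P => [-> | /P'3].
by rewrite (def_pblock (partition_trivIset BP') (setU11 _ _) xB).
Qed.

Lemma card_triple_partitions_block U B x : x \in B -> B \subset U -> #|B| = 3 ->
  #|[set P in triple_partitions U | pblock P x == B]| = #|triple_partitions (U :\: B)|.
Proof.
move=> xB BU B3; rewrite triple_partitions_block // card_in_imset // => P1 P2 P1T P2T.
have notB P : P \in triple_partitions (U :\: B) -> B \notin P.
  case/triple_partitionsP => PU _; apply/negP => /(partitionS PU) /subsetP /(_ x xB).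
  by rewrite inE xB.
by move=> e; rewrite -(setU1K (notB _ P1T)) -(setU1K (notB _ P2T)) e.
Qed.

Lemma card_triple_partitions_rec U x : x \in U ->
  #|triple_partitions U| =
  \sum_(C : {set 'I_k} | (C \subset U :\ x) && (#|C| == 2))
    #|triple_partitions (U :\: (x |: C))|.
Proof.
(* Sort the partitions by the two other elements of the block of [x]. *)
move=> xU; rewrite -sum1_card (partition_big (fun P => pblock P x :\ x)
  (fun C : {set 'I_k} => (C \subset U :\ x) && (#|C| == 2))) /= => [|P].
  apply: eq_bigr => C /andP [CU /eqP C2].
  have xC : x \notin C by apply: contraTN CU => xC; apply/subsetPn; exists x; rewrite ?inE ?eqxx.
  rewrite -(card_triple_partitions_block (x := x)) ?setU11 ?cardsU1 ?xC ?C2 //; last first.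
    by rewrite subUset sub1set xU (subset_trans CU) ?subD1set.
  rewrite -sum1_card; apply: eq_bigl => P; rewrite inE; case PT: (_ \in _) => //=.
  case/triple_partitionsP: PT => PU _.
  have xPx : x \in pblock P x by rewrite mem_pblock (cover_partition PU).
  by apply/eqP/eqP => [<- | ->]; rewrite ?setD1K ?setU1K.
case/triple_partitionsP => PU P3.
have xPx : x \in pblock P x by rewrite mem_pblock (cover_partition PU).
have PxP : pblock P x \in P by rewrite pblock_mem // (cover_partition PU).
rewrite setSD ?(partitionS PU) //=.
by move: (P3 _ PxP); rewrite (cardsD1 x) xPx add1n => -[->].
Qed.

Lemma card_triple_partitions m U :
  #|U| = 3 * m -> #|triple_partitions U| * (6 ^ m * m`!) = (3 * m)`!.
Proof.
elim: m U => [|m IH] U Um.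
  by move: Um; rewrite muln0 => /cards0_eq ->; rewrite triple_partitions_set0 cards1.
have /card_gt0P [x xU] : 0 < #|U| by rewrite Um.
have Uxm : #|U :\ x| = (3 * m).+2 by move: Um; rewrite (cardsD1 x) xU; lia.
rewrite (card_triple_partitions_rec xU) big_distrl /=.
rewrite (eq_bigr (fun=> (3 * m)`! * (6 * m.+1))) => [|C /andP [CU /eqP C2]]; last first.
  have xC : x \notin C by apply: contraTN CU => xC; apply/subsetPn; exists x; rewrite ?inE ?eqxx.
  rewrite -(IH (U :\: (x |: C))).
    by rewrite expnS factS; move: #|_| (6 ^ m) m`! => a b c; nia.
  rewrite cardsDS ?Um ?cardsU1 ?xC ?C2; first lia.
  by rewrite subUset sub1set xU (subset_trans CU) ?subD1set.
rewrite sum_nat_const.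
rewrite (eq_card (B := [set C : {set 'I_k} | C \subset U :\ x & #|C| == 2])) => [|C];
  last by rewrite !inE.
rewrite cards_draws Uxm.
have bin2_fact : 'C((3 * m).+2, 2) * 2 = (3 * m).+2 * (3 * m).+1.
  by have := bin_ffact (3 * m).+2 2; rewrite !ffactSS ffactn0 muln1.
have -> : 3 * m.+1 = (3 * m).+3 by lia.
rewrite !factS; move: bin2_fact; move: ('C(_, 2)) ((3 * m)`!) => c F; nia.
Qed.

End TriplePartitions.

Lemma triple_downset_inj k (U : {set 'I_k}) :
  {in triple_partitions U &, injective (@block_downset k)}.
Proof.
move=> P1 P2 /triple_partitionsP [P1U _] /triple_partitionsP [P2U _].
by apply: block_downset_inj; rewrite ?(partition_trivIset P1U) ?(partition_trivIset P2U)
  ?(partition0 P1U) ?(partition0 P2U).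
Qed.

Section TripleDownset.
Local Open Scope fset_scope.
Variable k : nat.
Variable P : {set {set 'I_k}}.
Hypothesis PT : P \in triple_partitions setT.

Let P_partition : partition P setT. Proof. by case/triple_partitionsP: PT. Qed.
Let P3 : {in P, forall B : {set 'I_k}, #|B| = 3}. Proof. by case/triple_partitionsP: PT. Qed.

Let k_eq : k = 3 * #|P|.
Proof. by rewrite -(card_triple_partition PT) cardsT card_ord. Qed.

Lemma deg_triple_downset x : x \in block_downset P -> deg x <= 3.
Proof.
case/imfset_chiP => A; rewrite in_block_subsets => /exists_inP [B PB AB] ->.
by rewrite deg_chi -(P3 PB) subset_leq_card.
Qed.

Lemma hilb_triple_downset i : 0 < i -> hilb (block_downset P) i = #|P| * 'C(3, i).
Proof.
move=> i_gt0.
rewrite hilb_block_downset card_block_subsets_eq ?(partition_trivIset P_partition) //.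
by rewrite -sum_nat_const; apply: eq_bigr => B /P3 ->.
Qed.

Lemma socle_triple_downset s : s \in socle (block_downset P) -> deg s = 3.
Proof.
rewrite socle_block_downset ?(partition_trivIset P_partition) ?(partition0 P_partition) //.
by case/imfset_chiP => B PB ->; rewrite deg_chi P3.
Qed.

Hypothesis P_gt0 : 0 < #|P|.

Lemma plength_triple_downset : plength (block_downset P) = 3.
Proof.
apply/eqP; rewrite eqn_leq plength_le /=; last exact: deg_triple_downset.
have /card_gt0P [B PB] := P_gt0.
have := deg_le_plength (_ : chi B \in block_downset P); rewrite deg_chi P3 //; apply.
by rewrite chi_in_imfset block_in_block_subsets.
Qed.

Lemma hilb0_triple_downset : hilb (block_downset P) 0 = 1.
Proof.
apply: hilb0; first exact: block_downset_partition.
apply/fset0Pn; exists (chi set0).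
have /card_gt0P [B PB] := P_gt0.
by rewrite chi_in_imfset in_block_subsets; apply/exists_inP; exists B; rewrite ?sub0set.
Qed.

Lemma Mpartition_triple_downset : Mpartition (3 * #|P|) #|P| (block_downset P).
Proof.
split.
- by move: k_eq; lia.
- split; first exact: block_downset_partition.
  rewrite card_sum_hilb plength_triple_downset !big_ord_recr big_ord0 /=.
  rewrite hilb0_triple_downset !hilb_triple_downset // bin1 binn -['C(3, 2)]/3.
  by have := k_eq; move: #|P| => p; lia.
- by move=> s /socle_triple_downset ->.
- rewrite !hilb_triple_downset // bin1 -['C(3, 2)]/3.
  by have := k_eq; move: #|P| => p; lia.
- rewrite -plength_triple_downset layer_ge_plength plength_triple_downset.
  by rewrite -/(hilb _ 3) hilb_triple_downset // binn muln1.
Qed.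

Lemma triple_downset_invariants :
  [/\ hilb (block_downset P) 0 = 1 /\ hilb (block_downset P) 1 = 3 * #|P|,
      hilb (block_downset P) 2 = 3 * #|P| /\ hilb (block_downset P) 3 = #|P|,
      plength (block_downset P) = 3 & Mpartition (3 * #|P|) #|P| (block_downset P)].
Proof.
rewrite hilb0_triple_downset plength_triple_downset !hilb_triple_downset //.
rewrite bin1 binn -['C(3, 2)]/3 muln1 (mulnC _ 3); split=> //.
exact: Mpartition_triple_downset.
Qed.

End TripleDownset.

Section Classification.
Local Open Scope fset_scope.
Variable k : nat.
Implicit Types (x s : pt k) (l : {fset pt k}).

Lemma unit_pt_in l i : hilb l 1 = k -> chi [set i] \in l.
Proof.
move=> l_hilb1; pose E := [set [set j] | j : 'I_k].
have sub : layer l 1 `<=` [fset chi A | A in E].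
  apply/fsubsetP => x; rewrite in_layer => /andP [_ /eqP /deg_eq1 [j ->]].
  by rewrite chi_in_imfset imset_f.
have /eqP eE : layer l 1 == [fset chi A | A in E].
  rewrite eqEfcard sub card_imfset_chi card_imset ?card_ord; last exact: set1_inj.
  by rewrite /= -/(hilb l 1) l_hilb1.
have : chi [set i] \in layer l 1 by rewrite eE chi_in_imfset imset_f.
by rewrite in_layer => /andP [].
Qed.

Definition socle_supports l := [set A | A \in [seq supp s | s <- socle l]].

Variable l : {fset pt k}.
Hypothesis l_partition : is_partition l.
Hypothesis l_hilb1 : hilb l 1 = k.
Hypothesis socle_deg : forall s, s \in socle l -> deg s <= 3.
Hypothesis socle_card : 3 * #|` socle l| <= k.

Let Q := socle_supports l.

Lemma socle_supportsP A : reflect (exists2 s, s \in socle l & A = supp s) (A \in Q).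
Proof. by rewrite inE; apply: (iffP mapP) => -[s ss ->]; exists s. Qed.

Lemma cover_socle_supports : cover Q = setT.
Proof.
apply/setP => i; rewrite inE; apply/bigcupP.
have [s ss /forallP /(_ i)] := socle_above (unit_pt_in i l_hilb1).
rewrite chiE inE eqxx => si; exists (supp s); first by apply/socle_supportsP; exists s.
by rewrite inE -lt0n.
Qed.

Lemma socle_supports_triple : Q \in triple_partitions setT.
Proof.
have Q3 A : A \in Q -> #|A| <= 3.
  by case/socle_supportsP => s ss ->; apply: leq_trans (card_supp_le_deg s) (socle_deg ss).
have Q_socle : #|Q| <= #|` socle l|.
  by rewrite cardsE -(size_map (@supp k)); apply: card_size.
(* k = #|cover Q| <= \sum_(A in Q) #|A| <= 3 #|Q| <= 3 #|socle l| <= k, so equality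
   holds throughout: Q is a partition and all its blocks have 3 elements. *)
have [cover_le cover_eq] := leq_card_cover Q.
have [sum_le sum_eq] := @leqif_sum _ (mem Q) (fun A => #|A| == 3) _ (fun=> 3)
  (fun A QA => leqif_eq (Q3 A QA)).
rewrite cover_socle_supports cardsT card_ord in cover_le cover_eq.
have sum3_le : \sum_(A in Q) 3 <= k by rewrite sum_nat_const; lia.
have /forall_inP Q_3 : [forall (A | A \in Q), #|A| == 3].
  by rewrite -sum_eq eqn_leq sum_le (leq_trans sum3_le).
apply/triple_partitionsP; split; last by move=> A /Q_3 /eqP.
apply/and3P; split; first by rewrite cover_socle_supports.
  by rewrite -cover_eq eqn_leq cover_le (leq_trans sum_le).
by apply: contraT => /negbNE /Q_3; rewrite cards0.
Qed.

Lemma socle_chi_supp s : s \in socle l -> s = chi (supp s).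
Proof.
move=> ss; apply: chi_supp; apply: leq_trans (socle_deg ss) _.
have /triple_partitionsP [_ ->] := socle_supports_triple => //.
by apply/socle_supportsP; exists s.
Qed.

Lemma partition_eq_block_downset : l = block_downset Q.
Proof.
apply/fsetP => x; apply/idP/imfset_chiP => [xl | [A]].
  have [s ss] := socle_above xl; rewrite (socle_chi_supp ss) => /le_pt_chi_inv [A As ->].
  exists A => //; rewrite in_block_subsets; apply/exists_inP; exists (supp s) => //.
  by apply/socle_supportsP; exists s.
rewrite in_block_subsets => /exists_inP [B /socle_supportsP [s ss ->] As] ->.
have /in_socle [sl _] := ss.
by apply: l_partition sl _; rewrite [s in le_pt _ s]socle_chi_supp // le_pt_chi.
Qed.

Lemma exists_triple_downset :
  exists2 P, P \in triple_partitions setT & l = block_downset P.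
Proof. by exists Q; [apply: socle_supports_triple | apply: partition_eq_block_downset]. Qed.

End Classification.
Unset Implicit Arguments. Set Strict Implicit. Set Printing Implicit Defensive.

Theorem proposition5p1 (n : nat) (hn : 1 <= n) :
  (forall l : {fset pt (3 * n)},
      is_partition l -> hilb l 1 = 3 * n -> socle_type_0003 l n ->
      [/\ hilb l 0 = 1 /\ hilb l 1 = 3 * n,
          hilb l 2 = 3 * n /\ hilb l 3 = n,
          plength l = 3 &
          Mpartition (3 * n) n l])
  /\ alpha_is (3 * n) (3 * n) n 3 ((3 * n)`! %/ (6 ^ n * n`!)).
Proof.
have card_P (P : {set {set 'I_(3 * n)}}) : P \in triple_partitions setT -> #|P| = n.
  by move/card_triple_partition; rewrite cardsT card_ord; lia.
split=> [l l_part l_hilb1 [socle3 socle_n] | ].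
  have [||P PT ->] := exists_triple_downset l_part l_hilb1.
  - by move=> s /socle3 ->.
  - by rewrite socle_n.
  by have := triple_downset_invariants PT; rewrite card_P // => /(_ hn).
exists [fset block_downset P | P in triple_partitions setT]%fset; split=> [l | ].
  split=> [/imfsetP [P /= PT ->] | [Mpart /(Mpartition_socle Mpart) [socle3 socle_n]]].
    by have := triple_downset_invariants PT; rewrite card_P // => /(_ hn) [].
  case: Mpart => _ [l_part _] _ [l_hilb1 _] _.
  have [||P PT ->] := exists_triple_downset l_part l_hilb1.
  - by move=> s /socle3 ->.
  - by rewrite socle_n.
  by apply/imfsetP; exists P.
rewrite card_in_imfset_set; last exact: triple_downset_inj.
have := card_triple_partitions (m := n) (U := [set: 'I_(3 * n)]).
rewrite cardsT card_ord => /(_ erefl) <-.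
by rewrite mulnK // muln_gt0 expn_gt0 fact_gt0.
Qed.
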